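(* Let $s$ be a non-empty string whose number $r$ of maximal runs is even. Then the only admissible bilateral run-peeling decomposition of $s$ that emits the minimum possible number of tokens is the one that, at every peeling step, takes $x=L$ and $y=R$ (i.e. peels both boundary runs completely, as Flashback does).
   Context: A maximal run of a string is a maximal block of consecutive equal symbols. An admissible bilateral run-peeling decomposition of a non-empty string $s$ is obtained by repeatedly applying the following rule to an active span (initially all of $s$) until it is consumed: (Termination) if the active span consists of a single run or of two adjacent runs, emit one terminal token for the span and stop; (Peeling step) otherwise, let $L$ be the length of the span's leading run (longest prefix of one repeated symbol) and $R$ the length of its trailing run (longest suffix of one repeated symbol), choose any integers $x\in\{1,\dots,L\}$ and $y\in\{1,\dots,R\}$, emit one token formed by the peeled prefix of length $x$ and the peeled suffix of length $y$, and continue with the remaining middle as the active span. *)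

From mathcomp Require Import all_boot.
Set Implicit Arguments. Unset Strict Implicit. Unset Printing Implicit Defensive.

Section RunPeeling.
Variable T : eqType.

Definition nruns (s : seq T) : nat :=
  if s is x :: t then (count id (pairmap (fun a b => a != b) x t)).+1 else 0.

Definition lead_run (s : seq T) : nat :=
  if s is x :: t then (find (predC1 x) t).+1 else 0.

Definition trail_run (s : seq T) : nat := lead_run (rev s).

Inductive token : Type :=
| Peel of seq T & seq T
| Term of seq T.

Definition peel_mid (x y : nat) (s : seq T) : seq T :=
  drop x (take (size s - y) s).

Inductive admissible : seq T -> seq token -> Prop :=
| adm_term s : s != [::] -> nruns s <= 2 -> admissible s [:: Term s]
| adm_peel s x y d :
    2 < nruns s ->
    0 < x <= lead_run s -> 0 < y <= trail_run s ->
    admissible (peel_mid x y s) d ->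
    admissible s (Peel (take x s) (drop (size s - y) s) :: d).

Inductive flashback : seq T -> seq token -> Prop :=
| fb_term s : s != [::] -> nruns s <= 2 -> flashback s [:: Term s]
| fb_peel s d :
    2 < nruns s ->
    flashback (peel_mid (lead_run s) (trail_run s) s) d ->
    flashback s (Peel (take (lead_run s) s)
                      (drop (size s - trail_run s) s) :: d).

Definition min_admissible (s : seq T) (d : seq token) : Prop :=
  admissible s d /\ forall d', admissible s d' -> size d <= size d'.

End RunPeeling.

From mathcomp Require Import all_boot.
From mathcomp Require Import zify.
Set Implicit Arguments.
Unset Strict Implicit.
Unset Printing Implicit Defensive.

(* A span with at least three runs has distinct leading and trailing runs, so
   a peeling step with parameters x, y removes exactly [x == L] + [y == R]
   runs: a partially peeled boundary run survives.  Hence every token removes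
   at most two runs, any decomposition of a string with r runs has at least
   r/2 tokens, and the bound is attained exactly when every peeling step takes
   x = L and y = R.  Flashback attains it, with ceil(r/2) tokens. *)

Section Runs.
Variable T : eqType.
Implicit Types (s t : seq T) (a b : T).

Lemma nruns_cons2 a b t : nruns [:: a, b & t] = (a != b) + nruns (b :: t).
Proof. by rewrite /= addnS. Qed.

Lemma nruns_gt0 s : s != [::] -> 0 < nruns s.
Proof. by case: s. Qed.

Lemma nruns_rcons a t b :
  nruns (rcons (a :: t) b) = nruns (a :: t) + (last a t != b).
Proof.
elim: t a => [|c t IH] a; first by rewrite /= addnC.
by rewrite !rcons_cons nruns_cons2 -rcons_cons IH nruns_cons2 addnA.
Qed.

Lemma nruns_rev s : nruns (rev s) = nruns s.
Proof.
elim: s => [|a [|b t] IH] //.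
rewrite rev_cons; case E: (rev (b :: t)) => [|c u].
  by move/(congr1 size): E; rewrite size_rev.
rewrite nruns_rcons -E IH nruns_cons2 addnC eq_sym.
by rewrite -(last_cons c) -E rev_cons last_rcons.
Qed.

Lemma lead_run_cons2 a b t :
  lead_run [:: a, b & t] = if b == a then (lead_run (b :: t)).+1 else 1.
Proof. by rewrite /lead_run /=; case: (eqVneq b a) => [->|]. Qed.

Lemma lead_run_gt0 s : s != [::] -> 0 < lead_run s.
Proof. by case: s. Qed.

Lemma trail_run_gt0 s : s != [::] -> 0 < trail_run s.
Proof. by rewrite /trail_run -size_eq0 -size_rev size_eq0; apply: lead_run_gt0. Qed.

Lemma lead_run_le_size s : lead_run s <= size s.
Proof. by case: s => //= a t; rewrite ltnS find_size. Qed.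

Lemma trail_run_le_size s : trail_run s <= size s.
Proof. by rewrite /trail_run -size_rev lead_run_le_size. Qed.

Lemma leq_lead_run_cat s t : lead_run s <= lead_run (s ++ t).
Proof.
case: s => //= a w; rewrite ltnS find_cat.
by case: ifP => // /negbT/hasNfind ->; rewrite leq_addr.
Qed.

Lemma lead_run_cat s t : lead_run s < size s -> lead_run (s ++ t) = lead_run s.
Proof.
case: s => //= a w; rewrite !ltnS find_cat; case: ifP => // /negbT/hasNfind ->.
by rewrite ltnn.
Qed.

Lemma lead_run_take n s : lead_run s < n <= size s ->
  lead_run (take n s) = lead_run s.
Proof.
case/andP=> lt_Ln le_ns; have size_u : size (take n s) = n by rewrite size_takel.
have [lt_u | ge_u] := ltnP (lead_run (take n s)) (size (take n s)).
  by rewrite -{2}(cat_take_drop n s) lead_run_cat.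
have := leq_lead_run_cat (take n s) (drop n s); rewrite cat_take_drop.
by move: ge_u (lead_run_le_size (take n s)); rewrite size_u; lia.
Qed.

Lemma nruns_drop_lead s x : 0 < x <= lead_run s ->
  nruns (drop x s) = nruns s - (x == lead_run s).
Proof.
elim: s x => [|a [|b t] IH] [|[|x]] // Hx.
  rewrite drop1 [behead _]/= nruns_cons2 lead_run_cons2.
  by case: (eqVneq b a) => [->|_]; rewrite /= ?eqxx ?subn0 ?addKn.
rewrite lead_run_cons2 in Hx *; case: (eqVneq b a) Hx IH => [-> Hx IH|//].
by rewrite nruns_cons2 eqxx add0n eqSS -IH.
Qed.

Lemma nruns_take_trail s y : 0 < y <= trail_run s ->
  nruns (take (size s - y) s) = nruns s - (y == trail_run s).
Proof.
move=> Hy; rewrite -(nruns_rev (take _ _)) -drop_rev.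
by rewrite nruns_drop_lead // nruns_rev.
Qed.

Lemma lead_run_lt_size s : 1 < nruns s -> lead_run s < size s.
Proof.
move=> r_gt1; have s_nil : s != [::] by case: (s) r_gt1.
rewrite ltn_neqAle lead_run_le_size andbT; apply/eqP=> L_eq.
have := @nruns_drop_lead s (lead_run s).
by rewrite lead_run_gt0 // eqxx L_eq drop_size leqnn /=; lia.
Qed.

Lemma lead_trail_lt_size s : 2 < nruns s -> lead_run s + trail_run s < size s.
Proof.
move=> r_gt2; have s_nil : s != [::] by case: (s) r_gt2.
set u := take (size s - trail_run s) s.
have r_u : nruns u = nruns s - 1.
  by rewrite nruns_take_trail ?eqxx ?trail_run_gt0 ?leqnn.
have size_u : size u = size s - trail_run s by rewrite size_takel ?leq_subr.
have lt_u : lead_run u < size u by apply: lead_run_lt_size; lia.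
have := lead_run_cat (drop (size s - trail_run s) s) lt_u.
rewrite cat_take_drop => ->; move: lt_u (trail_run_le_size s); lia.
Qed.

Lemma nruns_peel_mid s x y : 2 < nruns s ->
  0 < x <= lead_run s -> 0 < y <= trail_run s ->
  nruns (peel_mid x y s) = nruns s - (x == lead_run s) - (y == trail_run s).
Proof.
move=> r_gt2 Hx Hy; have LR := lead_trail_lt_size r_gt2.
have lead_u : lead_run (take (size s - y) s) = lead_run s.
  by apply: lead_run_take; lia.
by rewrite /peel_mid nruns_drop_lead lead_u // nruns_take_trail // subnAC.
Qed.

Lemma nruns_peel_mid_full s : 2 < nruns s ->
  nruns (peel_mid (lead_run s) (trail_run s) s) = nruns s - 2.
Proof.
move=> r_gt2; have s_nil : s != [::] by case: (s) r_gt2.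
rewrite nruns_peel_mid ?eqxx -?subnDA // ?leqnn andbT.
  exact: lead_run_gt0.
exact: trail_run_gt0.
Qed.

Lemma size_peel_mid s x y : size (peel_mid x y s) = size s - y - x.
Proof. by rewrite /peel_mid size_drop size_take; case: ltnP; lia. Qed.

End Runs.

Section Decompositions.
Variable T : eqType.
Implicit Types (s : seq T) (d : seq (token T)).

Lemma admissible_nruns_le s d : admissible s d -> nruns s <= (size d).*2.
Proof.
elim=> {s d} [//|s x y d r_gt2 Hx Hy _ IH] /=.
by move: IH; rewrite nruns_peel_mid //; lia.
Qed.

Lemma admissible_nruns_eq_flashback s d :
  admissible s d -> nruns s = (size d).*2 -> flashback s d.
Proof.
elim=> {s d} [s s_nil r_le2 | s x y d r_gt2 Hx Hy adm_d IH] /= r_eq.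
  exact: fb_term.
have := admissible_nruns_le adm_d; rewrite nruns_peel_mid // => r_mid.
have [ex ey] : x = lead_run s /\ y = trail_run s.
  by move: r_mid r_eq; case: eqVneq; case: eqVneq; lia.
subst x y; apply: fb_peel => //; apply: IH.
by rewrite nruns_peel_mid_full //; lia.
Qed.

Lemma flashback_admissible s d : flashback s d -> admissible s d.
Proof.
elim=> {s d} [s s_nil r_le2 | s d r_gt2 _ IH]; first exact: adm_term.
have s_nil : s != [::] by case: (s) r_gt2.
by apply: (adm_peel r_gt2) IH; rewrite (lead_run_gt0, trail_run_gt0) ?leqnn.
Qed.

Lemma flashback_size s d :
  flashback s d -> (size d).*2 = nruns s + odd (nruns s).
Proof.
elim=> {s d} [s s_nil r_le2 | s d r_gt2 _ IH] /=.
  by move: (nruns_gt0 s_nil) r_le2; case: (nruns s) => [|[|[|]]].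
rewrite doubleS IH nruns_peel_mid_full //; case: (nruns s) r_gt2 => [|[|r]] // _.
by rewrite !subSS subn0 /= negbK.
Qed.

Lemma flashback_exists s : s != [::] -> exists d, flashback s d.
Proof.
have [n] := ubnP (size s); elim: n s => // n IH s /ltnSE le_sn s_nil.
have [r_le2 | r_gt2] := leqP (nruns s) 2.
  by exists [:: Term s]; apply: fb_term.
set m := peel_mid (lead_run s) (trail_run s) s.
have LR := lead_trail_lt_size r_gt2.
have m_nil : m != [::].
  by rewrite -size_eq0 size_peel_mid; lia.
have [d fb_m] : exists d, flashback m d.
  by apply: IH m_nil; move: (lead_run_gt0 s_nil); rewrite size_peel_mid; lia.
by eexists; apply: fb_peel fb_m.
Qed.

End Decompositions.

Theorem corollary6p5 (T : eqType) (s : seq T) :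
  s != [::] -> ~~ odd (nruns s) ->
  (exists d, flashback s d /\ min_admissible s d) /\
  (forall d, min_admissible s d -> flashback s d).
Proof.
move=> s_nil r_even; have [d fb_d] := flashback_exists s_nil.
have adm_d := flashback_admissible fb_d.
have size_d : (size d).*2 = nruns s.
  by rewrite (flashback_size fb_d) (negbTE r_even) addn0.
split.
  exists d; split=> //; split=> // d' /admissible_nruns_le; lia.
move=> d' [adm_d' min_d']; apply: admissible_nruns_eq_flashback => //.
by have := admissible_nruns_le adm_d'; have := min_d' _ adm_d; lia.
Qed.
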